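(* In $\mathscr{L}=\mathbf{Set}^{\mathbf{[R]}}$ as described in the context, every object $A$ has a unique destructor, i.e. there is exactly one morphism $A\to TI$ where $T$ is the allocation monad; but $\mathscr{L}$ is not a model of affine logic in the sense of having an isomorphism $I\cong\top$: the monoidal unit $I$ is not isomorphic to the terminal object $\top$ (indeed there is no morphism $[R]\to I$, where the object $[R]$ is terminal).
   Context: $\mathbf{[R]}$ is the set of finite lists of natural numbers, seen as a discrete category; $++$ is concatenation. $\mathscr{L}=\mathbf{Set}^{\mathbf{[R]}}$: objects are families of sets $A(l)$ indexed by lists $l$; morphisms $A\to B$ are families of functions $A(l)\to B(l)$. Monoidal product (Day convolution): $(A\otimes B)(l)=\coprod_{l_1++l_2=l}A(l_1)\times B(l_2)$; unit $I([])=\{()\}$, $I(l)=\emptyset$ for $l\ne[]$. Right closed structure: $(A\rhd B)(l_1)=\prod_{l_2}\big(A(l_2)\to B(l_1++l_2)\big)$, so that morphisms $C\otimes A\to B$ correspond to morphisms $C\to A\rhd B$. The object $[R]$ is given by $[R](l)=\{l\}$ for every $l$; it is a terminal object $\top$. The allocation monad is $TA=[R]\rhd(A\otimes[R])$, the monad of the adjunction $(-\otimes[R])\dashv([R]\rhd -)$. A destructor for $A$ is a morphism $A\to TI$. *)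

(* The presheaf category L = Set^[R] over the discrete category
   of finite lists of naturals. Sets are modelled as Rocq types. *)
From Stdlib Require Import List.
Import ListNotations.

Definition Obj := list nat -> Type.

Definition Hom (A B : Obj) : Type := forall l : list nat, A l -> B l.

Definition idH (A : Obj) : Hom A A := fun l x => x.
Definition compH {A B C : Obj} (g : Hom B C) (f : Hom A B) : Hom A C :=
  fun l x => g l (f l x).

(* Day convolution: (A ⊗ B)(l) = ∐_{l1 ++ l2 = l} A(l1) × B(l2) *)
Definition tensor (A B : Obj) : Obj :=
  fun l => { p : list nat * list nat & ((fst p ++ snd p = l) * A (fst p) * B (snd p))%type }.

Definition I : Obj :=
  fun l => match l with [] => unit | _ :: _ => Empty_set end.

(* right closed structure: (A ▷ B)(l1) = ∏_{l2} (A(l2) -> B(l1 ++ l2)) *)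
Definition rhd (A B : Obj) : Obj :=
  fun l1 => forall l2 : list nat, A l2 -> B (l1 ++ l2).

Definition Rr : Obj := fun l => { l' : list nat | l' = l }.

Definition T (A : Obj) : Obj := rhd Rr (tensor A Rr).

Definition destructor (A : Obj) : Type := Hom A (T I).

Definition iso (A B : Obj) : Prop :=
  exists (f : Hom A B) (g : Hom B A),
    compH g f = idH A /\ compH f g = idH B.

(* Both positive claims say that an object is terminal, and an object is
   terminal as soon as each of its fibres is a singleton.  A fibre of I ⊗ [R] over l must split l as
   [] ++ l, so it is a singleton too, and A ▷ B has singleton fibres whenever
   B does; hence T I = [R] ▷ (I ⊗ [R]) is terminal.  Conversely, [R]([0]) is
   inhabited while I([0]) is empty, so there is no morphism [R] -> I. *)
From Stdlib Require Import List FunctionalExtensionality.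
Import ListNotations.

Lemma terminal_of_singleton_fibres (B : Obj) (pt : forall l, B l)
  (uniq : forall l (x y : B l), x = y) :
  forall A : Obj, exists! f : Hom A B, True.
Proof.
  intro A. exists (fun l _ => pt l). split; [trivial|].
  intros g _.
  apply functional_extensionality_dep; intro l.
  apply functional_extensionality; intro x.
  apply uniq.
Qed.

Definition Rr_pt (l : list nat) : Rr l := exist _ l eq_refl.

Lemma Rr_uniq l (x y : Rr l) : x = y.
Proof. destruct x as [a ea], y as [b eb]. subst. reflexivity. Qed.

Definition tensor_I_Rr_pt (l : list nat) : tensor I Rr l :=
  existT _ ([], l) (eq_refl, tt, Rr_pt l).

Lemma tensor_I_Rr_uniq l (x y : tensor I Rr l) : x = y.
Proof.
  destruct x as [[a b] [[e i] r]], y as [[a' b'] [[e' i'] r']]; simpl in *.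
  destruct a; [|destruct i]. destruct a'; [|destruct i'].
  simpl in *. subst. destruct i, i'.
  rewrite (Rr_uniq _ r r'). reflexivity.
Qed.

Lemma rhd_uniq (A B : Obj) (uniq : forall l (x y : B l), x = y) :
  forall l (x y : rhd A B l), x = y.
Proof.
  intros l x y.
  apply functional_extensionality_dep; intro l2.
  apply functional_extensionality; intro a.
  apply uniq.
Qed.

Lemma no_hom_Rr_I : Hom Rr I -> False.
Proof. intro f. exact (match f [0] (Rr_pt [0]) with end). Qed.

Theorem proposition3 :
  (* [R] is terminal *)
  (forall A : Obj, exists! f : Hom A Rr, True) /\
  (* every object has a unique destructor *)
  (forall A : Obj, exists! d : destructor A, True) /\
  (* I is not isomorphic to the terminal object [R] *)
  ~ iso I Rr /\
  (* indeed there is no morphism [R] -> I *)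
  (Hom Rr I -> False).
Proof.
  split; [|split; [|split]].
  - exact (terminal_of_singleton_fibres Rr Rr_pt Rr_uniq).
  - exact (terminal_of_singleton_fibres (T I)
             (fun l l2 _ => tensor_I_Rr_pt (l ++ l2))
             (rhd_uniq Rr (tensor I Rr) tensor_I_Rr_uniq)).
  - intros [_ [g _]]. exact (no_hom_Rr_I g).
  - exact no_hom_Rr_I.
Qed.
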